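(* Let $F$ be $(\ell,\omega)$-relatively smooth on $\mathcal X\cap\mathcal S$. For any $\rho>\ell$ and all $x\in\mathcal X\cap\mathcal S$, $$\rho^2D^{\mathrm{sym}}_\omega(\hat x,x^+)\le\frac{\ell}{\rho-\ell}\big(\Delta_\rho(x)+\Delta^+_\rho(x)\big).$$
   Context: Let $\mathcal X\subseteq\mathbb R^d$ be closed and convex, $\|\cdot\|$ a norm on $\mathbb R^d$. The problem is $\min_{x\in\mathcal X}\Phi(x):=F(x)+r(x)$, with $F$ differentiable and $r:\mathbb R^d\to\mathbb R$ convex, proper, lower semicontinuous. A DGF is $\omega:\mathrm{cl}(\mathcal S)\to\mathbb R$, $\mathcal S$ open with $\mathrm{ri}(\mathcal X)\subseteq\mathcal S$, $\omega$ continuously differentiable on $\mathcal S$ and $1$-strongly convex w.r.t. $\|\cdot\|$ on $\mathrm{cl}(\mathcal S)$; $D_\omega(x,y)=\omega(x)-\omega(y)-\langle\nabla\omega(y),x-y\rangle$, $D^{\mathrm{sym}}_\omega(x,y):=D_\omega(x,y)+D_\omega(y,x)$. For $\rho>0$ and $x\in\mathcal X\cap\mathcal S$: $\hat x:=\arg\min_{y\in\mathcal X}[\Phi(y)+\rho D_\omega(y,x)]$, $\Delta_\rho(x):=\rho^2D^{\mathrm{sym}}_\omega(\hat x,x)$; $x^+:=\arg\min_{y\in\mathcal X}[\langle\nabla F(x),y\rangle+r(y)+\rho D_\omega(y,x)]$, $\Delta^+_\rho(x):=\rho^2D^{\mathrm{sym}}_\omega(x^+,x)$ (minimizers assumed to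 exist). $F$ is $(\ell,\omega)$-relatively smooth on $\mathcal X\cap\mathcal S$ if for all $x,y\in\mathcal X\cap\mathcal S$: $-\ell D_\omega(x,y)\le F(x)-F(y)-\langle\nabla F(y),x-y\rangle\le\ell D_\omega(x,y)$. *)

From HB Require Import structures.
From mathcomp Require Import all_boot all_order all_algebra.
From mathcomp Require Import all_classical all_reals all_analysis.
Set Implicit Arguments. Unset Strict Implicit. Unset Printing Implicit Defensive.
Import Order.TTheory GRing.Theory Num.Theory.
Import numFieldNormedType.Exports.
Local Open Scope classical_set_scope.
Local Open Scope ring_scope.

Section Defs.
Variables (R : realType) (d : nat).
Notation V := 'rV[R]_d.

Definition dotp (u v : V) : R := \sum_(i < d) u 0 i * v 0 i.

Definition convex_setV (X : set V) : Prop :=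
  forall x y t, X x -> X y -> 0 <= t <= 1 -> X (t *: x + (1 - t) *: y).

Definition convex_funV (f : V -> R) : Prop :=
  forall x y t, 0 <= t <= 1 -> f (t *: x + (1 - t) *: y) <= t * f x + (1 - t) * f y.

Definition is_norm (N : V -> R) : Prop :=
  (forall x, N x = 0 -> x = 0) /\
  (forall (a : R) x, N (a *: x) = `|a| * N x) /\
  (forall x y, N (x + y) <= N x + N y).

Definition aff_hull (X : set V) : set V :=
  [set y | exists (n : nat) (p : 'I_n -> V) (w : 'I_n -> R),
      (forall i, X (p i)) /\ \sum_(i < n) w i = 1 /\ y = \sum_(i < n) w i *: p i].

Definition rel_interior (X : set V) : set V :=
  [set x | X x /\ exists e : R, 0 < e /\
      forall y, aff_hull X y -> ball x e y -> X y].

Definition is_gradient_on (A : set V) (f : V -> R) (g : V -> V) : Prop :=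
  forall x, A x -> differentiable f x /\ forall h, 'd f x h = dotp (g x) h.

Definition strongly_convex_on (N : V -> R) (A : set V) (w : V -> R) : Prop :=
  forall x y t, A x -> A y -> 0 <= t <= 1 -> A (t *: x + (1 - t) *: y) ->
    w (t *: x + (1 - t) *: y) <=
      t * w x + (1 - t) * w y - t * (1 - t) / 2 * (N (x - y)) ^+ 2.

Definition is_DGF (N : V -> R) (X S : set V) (w : V -> R) (gw : V -> V) : Prop :=
  [/\ open S, rel_interior X `<=` S,
      is_gradient_on S w gw,
      (forall x, S x -> {for x, continuous gw}) &
      strongly_convex_on N (closure S) w].

Definition breg (w : V -> R) (gw : V -> V) (x y : V) : R :=
  w x - w y - dotp (gw y) (x - y).
Definition breg_sym (w : V -> R) (gw : V -> V) (x y : V) : R :=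
  breg w gw x y + breg w gw y x.

Definition rel_smooth (l : R) (F : V -> R) (gF : V -> V)
    (w : V -> R) (gw : V -> V) (X S : set V) : Prop :=
  forall x y, X x -> S x -> X y -> S y ->
    - l * breg w gw x y <= F x - F y - dotp (gF y) (x - y) <= l * breg w gw x y.

Definition is_argmin (X : set V) (phi : V -> R) (z : V) : Prop :=
  X z /\ forall y, X y -> phi z <= phi y.

End Defs.

From HB Require Import structures.
From mathcomp Require Import all_boot all_order all_algebra.
From mathcomp Require Import all_classical all_reals all_analysis.
From mathcomp Require Import lra.
Set Implicit Arguments.
Unset Strict Implicit.
Unset Printing Implicit Defensive.
Import Order.TTheory GRing.Theory Num.Theory.
Import numFieldNormedType.Exports.
Local Open Scope classical_set_scope.
Local Open Scope ring_scope.

(** Adding the first-order optimality conditions of the two prox points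
    [xhat] and [xplus] gives
    [rho * Dsym(xhat, xplus) <= <gF xhat - gF x, xplus - xhat>].  By the
    three-point identity of Bregman divergences the right-hand side is
    [D_F(xplus, x) - D_F(xplus, xhat) - D_F(xhat, x)], which relative
    smoothness bounds by [l] times the corresponding [D_w]'s.  Moving the
    [D_w(xplus, xhat)] term to the left and enlarging the others to symmetric
    divergences yields [(rho - l) Dsym(xhat, xplus) <= l (Dsym(xhat, x) +
    Dsym(xplus, x))]. *)

Lemma diff_ge_of_quotients_ge (R : realType) (V : normedModType R)
    (f : V -> R) a h c :
  differentiable f a ->
  (forall t, 0 < t <= 1 -> c <= (f (a + t *: h) - f a) / t) -> c <= 'd f a h.
Proof.
move=> df quot_ge; rewrite -deriveE // /derive.
set q := fun t : R => _.
have cvq : cvg (q @ 0^') by exact: diff_derivable.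
rewrite (cvg_at_rightE q) //; apply: limr_ge.
  rewrite -(cvg_at_rightE q) //; apply: cvg_trans cvq; apply: cvg_app.
  move=> A [e e0 Ae]; exists e => // t te t0.
  by apply: Ae => //; exact: lt0r_neq0.
near=> t; rewrite /q /= [_ *: _]mulrC [_ + a]addrC; apply: quot_ge.
apply/andP; split; [near: t; exact: nbhs_right_gt|].
by near: t; exact: nbhs_right_le.
Unshelve. all: by end_near. Qed.

Section dotp.
Variables (R : realType) (d : nat).
Implicit Types (u v z : 'rV[R]_d) (k : R).

Lemma dotpC u v : dotp u v = dotp v u.
Proof. by apply: eq_bigr => i _; rewrite mulrC. Qed.

Lemma dotpDr u v z : dotp u (v + z) = dotp u v + dotp u z.
Proof. by rewrite /dotp -big_split; apply: eq_bigr => i _; rewrite mxE mulrDr. Qed.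

Lemma dotpZr u k v : dotp u (k *: v) = k * dotp u v.
Proof. by rewrite /dotp mulr_sumr; apply: eq_bigr => i _; rewrite mxE mulrCA. Qed.

Lemma dotpNr u v : dotp u (- v) = - dotp u v.
Proof. by rewrite -scaleN1r dotpZr mulN1r. Qed.

Lemma dotpBr u v z : dotp u (v - z) = dotp u v - dotp u z.
Proof. by rewrite dotpDr dotpNr. Qed.

Lemma dotpDl u v z : dotp (u + v) z = dotp u z + dotp v z.
Proof. by rewrite !(dotpC _ z) dotpDr. Qed.

Lemma dotpZl k u v : dotp (k *: u) v = k * dotp u v.
Proof. by rewrite !(dotpC _ v) dotpZr. Qed.

Lemma dotpBl u v z : dotp (u - v) z = dotp u z - dotp v z.
Proof. by rewrite !(dotpC _ z) dotpBr. Qed.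

Lemma dotp_is_linear u : linear (dotp u : _ -> R^o).
Proof. by move=> k v z; rewrite dotpDr dotpZr. Qed.

HB.instance Definition _ u :=
  GRing.isLinear.Build R 'rV[R]_d R^o _ (dotp u) (dotp_is_linear u).

Lemma dotp_is_gradient u : is_gradient_on setT (dotp u) (fun=> u).
Proof.
have dotp_diff v : differentiable (dotp u : _ -> R^o) v.
  rewrite [dotp u](_ : _ = \sum_(i < d) (fun v => u 0 i * v 0 i : R^o)).
    apply: differentiable_sum => i.
    by apply: differentiableM => //; exact: differentiable_coord.
  by rewrite fct_sumE.
have dotp_cont : continuous (dotp u : _ -> R^o).
  by move=> v; exact: differentiable_continuous.
by move=> v _; split => // h; rewrite diff_lin.
Qed.

End dotp.

Section first_order.
Variables (R : realType) (d : nat).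
Notation V := 'rV[R]_d.

Lemma convex_funV_add_dotp (g : V -> R) u :
  convex_funV g -> convex_funV (fun y => g y + dotp u y).
Proof.
move=> convg x y t t01; rewrite dotpDr !dotpZr.
have := convg x y t t01; lra.
Qed.

Lemma argmin_first_order (X : set V) (f g : V -> R) a b :
  convex_setV X -> convex_funV g -> X b ->
  is_argmin X (fun y => f y + g y) a -> differentiable f a ->
  0 <= 'd f a (b - a) + (g b - g a).
Proof.
move=> convX convg Xb [Xa a_min] df.
suff : g a - g b <= 'd f a (b - a) by lra.
apply: diff_ge_of_quotients_ge => // t /andP[t_gt0 t_le1].
have t01 : 0 <= t <= 1 by rewrite ltW.
have -> : a + t *: (b - a) = t *: b + (1 - t) *: a.
  by rewrite scalerBr scalerBl scale1r addrCA addrC.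
rewrite ler_pdivlMr //.
have := a_min _ (convX b a t Xb Xa t01); have := convg b a t t01; lra.
Qed.

Lemma breg_prox_first_order (X : set V) (G r w : V -> R) (gG gw : V -> V)
    rho x a b :
  convex_setV X -> convex_funV r -> X b ->
  differentiable G a /\ (forall h, 'd G a h = dotp (gG a) h) ->
  differentiable w a /\ (forall h, 'd w a h = dotp (gw a) h) ->
  is_argmin X (fun y => G y + r y + rho * breg w gw y x) a ->
  0 <= dotp (gG a + rho *: (gw a - gw x)) (b - a) + (r b - r a).
Proof.
move=> convX convr Xb [dG dGE] [dw dwE] [Xa a_min].
have df : differentiable (G + rho *: w) a.
  by apply: differentiableD => //; exact: differentiableZ.
have a_min' : is_argmin X
    (fun y => (G + rho *: w) y + (r y + dotp (- rho *: gw x) y)) a.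
  split => // y Xy; have := a_min y Xy.
  rewrite /breg !fctE !dotpZl !dotpBr -![rho *: w _]/(rho * w _); lra.
have convr' := convex_funV_add_dotp (- rho *: gw x) convr.
have := argmin_first_order convX convr' Xb a_min' df.
rewrite diffD //; last exact: differentiableZ.
rewrite diffZ //= dGE dwE -[rho *: dotp _ _]/(rho * _).
rewrite dotpDl !dotpZl dotpBl; lra.
Qed.

End first_order.

Section bregman.
Variables (R : realType) (d : nat).
Notation V := 'rV[R]_d.
Implicit Types (f w : V -> R) (g gw : V -> V).

Lemma breg_three_point f g a b c :
  breg f g a c = breg f g a b + breg f g b c + dotp (g b - g c) (a - b).
Proof. rewrite /breg !dotpBl !dotpBr; lra. Qed.

Lemma breg_sym_dotp w gw a b : breg_sym w gw a b = dotp (gw a - gw b) (a - b).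
Proof. rewrite /breg_sym /breg !dotpBl !dotpBr; lra. Qed.

Variables (l : R) (F w : V -> R) (gF gw : V -> V) (X S : set V).
Hypothesis smoothF : rel_smooth l F gF w gw X S.

Lemma rel_smooth_breg_ge0 a b : X a -> S a -> X b -> S b ->
  0 <= l * breg w gw a b.
Proof. by move=> Xa Sa Xb Sb; have /andP[lo up] := smoothF Xa Sa Xb Sb; lra. Qed.

Lemma rel_smooth_three_point_le a b c :
  X a -> S a -> X b -> S b -> X c -> S c ->
  dotp (gF b - gF c) (a - b) <=
    l * (breg w gw a c + breg w gw a b + breg w gw b c).
Proof.
move=> Xa Sa Xb Sb Xc Sc; have := breg_three_point F gF a b c.
have /andP[_ ac] := smoothF Xa Sa Xc Sc.
have /andP[ab _] := smoothF Xa Sa Xb Sb.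
have /andP[bc _] := smoothF Xb Sb Xc Sc.
rewrite /breg in ac ab bc *; lra.
Qed.

End bregman.

Theorem lemma4 (R : realType) (d : nat)
  (X S : set 'rV[R]_d) (N : 'rV[R]_d -> R)
  (F r w : 'rV[R]_d -> R) (gF gw : 'rV[R]_d -> 'rV[R]_d)
  (l rho : R) (x xhat xplus : 'rV[R]_d) :
  closed X -> convex_setV X ->
  is_norm N ->
  is_gradient_on setT F gF ->
  convex_funV r -> lower_semicontinuous (fun y => (r y)%:E) ->
  is_DGF N X S w gw ->
  rel_smooth l F gF w gw X S ->
  0 < rho -> l < rho ->
  X x -> S x ->
  is_argmin X (fun y => F y + r y + rho * breg w gw y x) xhat -> S xhat ->
  is_argmin X (fun y => dotp (gF x) y + r y + rho * breg w gw y x) xplus -> S xplus ->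
  rho ^+ 2 * breg_sym w gw xhat xplus <=
    l / (rho - l) * (rho ^+ 2 * breg_sym w gw xhat x + rho ^+ 2 * breg_sym w gw xplus x).
Proof.
move=> _ convX _ gradF convr _ [_ _ gradw _ _] smoothF rho_gt0 l_lt_rho Xx Sx.
move=> xhat_min Sxhat xplus_min Sxplus.
have [Xxhat _] := xhat_min; have [Xxplus _] := xplus_min.
have opt_hat := breg_prox_first_order convX convr Xxplus
  (gradF xhat I) (gradw xhat Sxhat) xhat_min.
have opt_plus := breg_prox_first_order convX convr Xxhat
  (dotp_is_gradient (gF x) I) (gradw xplus Sxplus) xplus_min.
have descent :
    rho * breg_sym w gw xhat xplus <= dotp (gF xhat - gF x) (xplus - xhat).
  move: opt_hat opt_plus; rewrite breg_sym_dotp.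
  by rewrite !dotpBl !dotpDl !dotpZl !dotpBl !dotpBr; lra.
have smooth_bound :=
  rel_smooth_three_point_le smoothF Xxplus Sxplus Xxhat Sxhat Xx Sx.
have key : (rho - l) * breg_sym w gw xhat xplus <=
           l * (breg_sym w gw xhat x + breg_sym w gw xplus x).
  have := rel_smooth_breg_ge0 smoothF Xx Sx Xxhat Sxhat.
  have := rel_smooth_breg_ge0 smoothF Xx Sx Xxplus Sxplus.
  have := rel_smooth_breg_ge0 smoothF Xxhat Sxhat Xxplus Sxplus.
  move: descent smooth_bound; rewrite /breg_sym; lra.
rewrite -mulrDr mulrCA ler_wpM2l ?sqr_ge0 //.
by rewrite mulrAC ler_pdivlMr ?subr_gt0 // mulrC.
Qed.
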